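(* Let $X,Y$ be compact topological spaces, $c\in C(X\times Y)$, fix $x_0\in X$, and for each $k>0$ let $\mu^{(k)}\in\mathcal{P}(X)$, $\nu^{(k)}\in\mathcal{P}(Y)$. Then the union $\bigcup_{k>0}S^{(k)}(C(X))$ is relatively compact in $C(X)/\mathbb{R}$; that is, the set $\{w-w(x_0):\ w\in S^{(k)}(C(X))\text{ for some }k>0\}$ is relatively compact in $C(X)$ with the sup-norm.
   Context: For $k>0$, $u\in C(X)$, $v\in C(Y)$: $v^{(k)}[u](y)=k^{-1}\log\int_Xe^{-kc(x,y)-ku(x)}d\mu^{(k)}(x)$, $u^{(k)}[v](x)=k^{-1}\log\int_Ye^{-kc(x,y)-kv(y)}d\nu^{(k)}(y)$, and $S^{(k)}(u)=u^{(k)}[v^{(k)}[u]]$. *)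

From HB Require Import structures.
From mathcomp Require Import all_boot all_order all_algebra.
From mathcomp Require Import all_classical all_reals all_analysis.
Set Implicit Arguments. Unset Strict Implicit. Unset Printing Implicit Defensive.
Import Order.TTheory GRing.Theory Num.Theory.
Import numFieldNormedType.Exports.
Local Open Scope classical_set_scope.
Local Open Scope ring_scope.

Notation borel X := (g_sigma_algebraType (@open X)).

Definition Prob (X : ptopologicalType) (R : realType) :=
  probability (borel X) R.

Definition vk {R : realType} {X Y : ptopologicalType} (k : R)
  (mu : Prob X R) (c : X * Y -> R) (u : X -> R) : Y -> R :=
  fun y => k^-1 * ln (fine (\int[mu]_(x in [set: borel X])
                              (expR (- k * c (x, y) - k * u x))%:E)).

Definition uk {R : realType} {X Y : ptopologicalType} (k : R)
  (nu : Prob Y R) (c : X * Y -> R) (v : Y -> R) : X -> R :=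
  fun x => k^-1 * ln (fine (\int[nu]_(y in [set: borel Y])
                              (expR (- k * c (x, y) - k * v y))%:E)).

Definition Sk {R : realType} {X Y : ptopologicalType} (k : R)
  (mu : Prob X R) (nu : Prob Y R) (c : X * Y -> R) (u : X -> R) : X -> R :=
  uk k nu c (vk k mu c u).

From HB Require Import structures.
From mathcomp Require Import all_boot all_order all_algebra.
From mathcomp Require Import all_classical all_reals all_analysis.
From mathcomp Require Import measurable_realfun.
From mathcomp Require Import ring lra.
Import Order.TTheory GRing.Theory Num.Theory.
Import numFieldNormedType.Exports.
Local Open Scope classical_set_scope.
Local Open Scope ring_scope.

(* Both v^(k)[u](y) and u^(k)[v](x) have the form k^-1 log E[exp(-k f - k h)], and
   such a scaled log-mean-exp is 1-Lipschitz in f for the sup-norm. Hence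
   |S^(k)(u)(x) - S^(k)(u)(x')| <= sup_y |c(x, y) - c(x', y)|, uniformly in k, mu, nu
   and u. The normalised family is therefore bounded by 2 sup|c| and equicontinuous,
   because c is uniformly continuous on the compact X x Y, and Arzela-Ascoli
   concludes. *)

Lemma continuous_borel_measurable {R : realType} {Z : ptopologicalType}
    {f : Z -> R} :
  continuous f -> measurable_fun [set: borel Z] (f : borel Z -> R).
Proof.
move=> /continuousP cf.
apply: (measurability _ (RGenOpens.measurableE R)).
move=> _ [_ [a [b ->] <-]]; rewrite setTI.
by apply: sub_sigma_algebra; apply: cf; exact: interval_open.
Qed.

Lemma compact_continuous_bounded {R : realType} {T : topologicalType}
    {f : T -> R} :
  compact [set: T] -> continuous f -> exists M, forall t, `|f t| <= M.
Proof.
move=> cptT cf.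
have /compact_bounded[M [_ fM]] : compact (f @` [set: T]).
  by apply: continuous_compact => //; exact: continuous_subspaceT.
by exists (M + 1) => t; apply: fM; [rewrite ltrDl | exists t].
Qed.

Lemma compact_equicontinuous_sections {R : realType} {A B : topologicalType}
    {f : A * B -> R} (b0 : B) (e : R) :
  compact [set: A] -> continuous f -> 0 < e ->
  \forall b \near b0, forall a, `|f (a, b0) - f (a, b)| < e.
Proof.
move=> /compact_near_coveringP cptA cf e_gt0.
suff : \forall b \near b0, [set: A] `<=` (fun a => `|f (a, b0) - f (a, b)| < e).
  by apply: filterS => b Hb a; exact: Hb.
apply: cptA => a _; have e2_gt0 : 0 < e / 2 by rewrite divr_gt0.
have /cvgr_dist_lt/(_ _ e2_gt0)[[U V] /= [Ua Vb0] UV] := cf (a, b0).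
exists (U, V) => //= -[a' b] [Ua' Vb] /=.
have := UV (a', b) (conj Ua' Vb).
have := UV (a', b0) (conj Ua' (nbhs_singleton Vb0)).
rewrite /= => h1 h2; rewrite (splitr e); apply: le_lt_trans (ltrD h1 h2).
rewrite -[X in `|X|](subrKA (f (a, b0))) (le_trans (ler_normD _ _)) //.
by rewrite -normrN opprB.
Qed.

Section CompactDomain.
Context {X : topologicalType} {V : uniformType}.
Hypothesis cptX : compact [set: X].

Lemma family_compact_nbhsE :
  @nbhs _ {family compact, X -> V} = @nbhs _ {uniform X -> V}.
Proof.
apply/funext => f; apply/seteqP; split => A.
- have cvgf : {family compact, nbhs (f : {uniform X -> V}) --> f}.
    by apply/fam_cvgP => B _; exact: uniform_subset_cvg (@cvg_id _ _).
  exact: cvgf.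
- have /fam_cvgP cvgf : {family compact, nbhs (f : {family compact, X -> V}) --> f} by [].
  exact: cvgf setT cptX A.
Qed.

Lemma precompact_uniform_family_compact (W : set (X -> V)) :
  precompact (W : set {family compact, X -> V}) ->
  precompact (W : set {uniform X -> V}).
Proof.
rewrite !precompactE /compact /cluster /closure.
by rewrite family_compact_nbhsE.
Qed.

End CompactDomain.

Section LogMeanExp.
Context {R : realType} {Z : ptopologicalType} (P : Prob Z R).
Hypothesis cptZ : compact [set: Z].

Definition mean_exp (a : Z -> R) : \bar R :=
  \int[P]_(z in [set: borel Z]) (expR (a z))%:E.

Definition log_mean_exp (a : Z -> R) : R := ln (fine (mean_exp a)).

Lemma measurable_expR_EFin (a : Z -> R) :
  measurable_fun [set: borel Z] (a : borel Z -> R) ->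
  measurable_fun [set: borel Z] (fun z : borel Z => (expR (a z))%:E).
Proof. by move=> ma; apply/measurable_EFinP; exact: measurableT_comp. Qed.

Lemma mean_exp_bounds (a : Z -> R) (M : R) :
  measurable_fun [set: borel Z] (a : borel Z -> R) ->
  (forall z, `|a z| <= M) ->
  ((expR (- M))%:E <= mean_exp a <= (expR M)%:E)%E.
Proof.
move=> ma aM.
have intP_cst (r : R) : (\int[P]_(z in [set: borel Z]) cst r%:E z = r%:E)%E.
  by rewrite integral_cst // -[X in (_ * X)%E]/(P setT) probability_setT mule1.
have /measurable_expR_EFin mea := ma.
have aM_itv z : - M <= a z <= M by rewrite -ler_norml.
apply/andP; split; rewrite -intP_cst; apply: ge0_le_integral => //= z _;
  by rewrite lee_fin ?expR_ge0 // ler_expR; case/andP: (aM_itv z).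
Qed.

Lemma mean_exp_pos (a : Z -> R) :
  continuous a -> exists2 r : R, 0 < r & mean_exp a = r%:E.
Proof.
move=> ca; have [M aM] := compact_continuous_bounded cptZ ca.
have := mean_exp_bounds _ _ (continuous_borel_measurable ca) aM.
case: (mean_exp a) => [r /andP[lo _]|/andP[_]|/andP[]] //.
by exists r => //; apply: lt_le_trans (expR_gt0 (- M)) _; rewrite -lee_fin.
Qed.

Lemma mean_exp_shift_le (a b : Z -> R) (d : R) :
  measurable_fun [set: borel Z] (a : borel Z -> R) ->
  measurable_fun [set: borel Z] (b : borel Z -> R) ->
  (forall z, a z <= b z + d) ->
  (mean_exp a <= (expR d)%:E * mean_exp b)%E.
Proof.
move=> /measurable_expR_EFin ma /measurable_expR_EFin mb ab.
rewrite /mean_exp -ge0_integralZl_EFin ?expR_ge0 //.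
apply: ge0_le_integral => //; first exact: measurable_funeM.
by move=> z _; rewrite -EFinM lee_fin -expRD ler_expR addrC.
Qed.

Lemma log_mean_exp_shift_le (a b : Z -> R) (d : R) :
  continuous a -> continuous b -> (forall z, a z <= b z + d) ->
  log_mean_exp a <= log_mean_exp b + d.
Proof.
move=> ca cb ab; rewrite /log_mean_exp.
have := mean_exp_shift_le _ _ _ (continuous_borel_measurable ca)
  (continuous_borel_measurable cb) ab.
have [r r_gt0 ->] := mean_exp_pos _ ca; have [s s_gt0 ->] := mean_exp_pos _ cb.
rewrite -EFinM lee_fin /= => le_rs.
by rewrite -ler_expR expRD !lnK ?posrE // mulrC.
Qed.

Lemma log_mean_exp_lipschitz (a b : Z -> R) (d : R) :
  continuous a -> continuous b -> (forall z, `|a z - b z| <= d) ->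
  `|log_mean_exp a - log_mean_exp b| <= d.
Proof.
move=> ca cb ab; rewrite ler_distl; apply/andP; split.
- rewrite lerBlDr; apply: log_mean_exp_shift_le => // z.
  by have := ab z; rewrite ler_distl => /andP[]; lra.
- apply: log_mean_exp_shift_le => // z.
  by have := ab z; rewrite ler_distl => /andP[]; lra.
Qed.

Lemma scaled_log_mean_exp_lipschitz (k : R) (f g h : Z -> R) (d : R) :
  0 < k -> continuous f -> continuous g -> continuous h ->
  (forall z, `|f z - g z| <= d) ->
  `|k^-1 * log_mean_exp (fun z => - k * f z - k * h z)
    - k^-1 * log_mean_exp (fun z => - k * g z - k * h z)| <= d.
Proof.
move=> k_gt0 cf cg ch fg.
have ck q : continuous q -> continuous (fun z => - k * q z - k * h z).
  by move=> cq z; apply: cvgB; apply: cvgMl_tmp; [exact: cq | exact: ch].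
rewrite -mulrBr normrM gtr0_norm ?invr_gt0 // mulrC ler_pdivrMr //.
apply: log_mean_exp_lipschitz; [exact: ck | exact: ck | move=> z].
have -> : - k * f z - k * h z - (- k * g z - k * h z) = k * (g z - f z) by ring.
by rewrite normrM gtr0_norm // mulrC ler_pM2r // distrC.
Qed.

End LogMeanExp.

Section EntropicTransport.
Context {R : realType} {X Y : ptopologicalType}.
Hypotheses (cptX : compact [set: X]) (cptY : compact [set: Y]).
Variable c : X * Y -> R.
Hypothesis cc : continuous c.

Let cc_swap : continuous (fun p : Y * X => c (p.2, p.1)).
Proof. by move=> p; apply: continuous_comp (cc _); exact: swap_continuous. Qed.

Let continuous_cost_l y : continuous (fun x => c (x, y)).
Proof. exact: (continuous_curry cc_swap).2. Qed.

Let continuous_cost_r x : continuous (fun y => c (x, y)).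
Proof. exact: (continuous_curry cc).2. Qed.

Lemma continuous_vk k mu u : 0 < k -> continuous u -> continuous (vk k mu c u).
Proof.
move=> k_gt0 cu y0; apply/cvgrPdist_le => e e_gt0.
apply: filterS (compact_equicontinuous_sections y0 e cptX cc e_gt0) => y cy.
apply: scaled_log_mean_exp_lipschitz => // x; exact/ltW/cy.
Qed.

Lemma Sk_dist_le k mu nu u x x' d : 0 < k -> continuous u ->
  (forall y, `|c (x, y) - c (x', y)| <= d) ->
  `|Sk k mu nu c u x - Sk k mu nu c u x'| <= d.
Proof.
move=> k_gt0 cu cd; apply: scaled_log_mean_exp_lipschitz => //.
exact: continuous_vk.
Qed.

Lemma Sk_equicontinuous x e : 0 < e ->
  \forall x' \near x, forall k mu nu u, 0 < k -> continuous u ->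
    `|Sk k mu nu c u x - Sk k mu nu c u x'| < e.
Proof.
move=> e_gt0; have e2_gt0 : 0 < e / 2 by rewrite divr_gt0.
apply: filterS (compact_equicontinuous_sections x (e / 2) cptY cc_swap e2_gt0).
move=> x' cx' k mu nu u k_gt0 cu; apply: (@le_lt_trans _ _ (e / 2)); last lra.
by apply: Sk_dist_le => // y; exact/ltW/cx'.
Qed.

Lemma Sk_oscillation_bounded : exists M, forall k mu nu u x x',
  0 < k -> continuous u -> `|Sk k mu nu c u x - Sk k mu nu c u x'| <= M.
Proof.
have cptXY : compact [set: X * Y] by rewrite -setXTT; exact: compact_setX.
have [M cM] := compact_continuous_bounded cptXY cc.
exists (M + M) => k mu nu u x x' k_gt0 cu; apply: Sk_dist_le => // y.
by apply: le_trans (ler_normB _ _) _; exact: lerD.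
Qed.

End EntropicTransport.

Theorem lemma2p12 (R : realType) (X Y : ptopologicalType)
  (hX : compact [set: X]) (hY : compact [set: Y])
  (c : X * Y -> R) (hc : continuous c) (x0 : X)
  (mu : R -> Prob X R) (nu : R -> Prob Y R) :
  precompact
    ([set (fun x => w x - w x0) | w in
       [set w | exists k : R, 0 < k /\
          exists u : X -> R, continuous u /\ w = Sk k (mu k) (nu k) c u]]
     : set {uniform X -> R}).
Proof.
apply: precompact_uniform_family_compact => //.
apply: (@pointwise_precompact_equicontinuous X R (@Rhausdorff R)) => [x|x E].
- have [M SkM] := Sk_oscillation_bounded hX hY c hc.
  apply: (@precompact_subset _ _ `[- M, M]%classic); last first.
    by apply: compact_precompact; [exact: Rhausdorff | exact: segment_compact].
  move=> _ [_ [_ [k [k_gt0 [u [cu ->]]]] <-] <-].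
  by rewrite /= in_itv /= -ler_norml; exact: SkM.
- rewrite -entourage_ballE => -[e /= e_gt0 ballE].
  apply: filterS (Sk_equicontinuous hX hY c hc x e e_gt0) => x' Skx'.
  move=> _ [_ [k [k_gt0 [u [cu ->]]]] <-]; apply: ballE.
  by rewrite /ball /= opprB addrA subrK; exact: Skx'.
Qed.
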